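(* Let $(R,\mathfrak{m},k)$ be a Noetherian local ring with $\mathfrak{m}^2=0$, and let $M$ be a finitely generated $R$-module with no nonzero free direct summand. Then $\lim_{n\to\infty}\frac{\ell(M^{n\ast})}{\operatorname{type}(R)^n}=\beta_0(M)$.
   Context: $M^\ast=\operatorname{Hom}_R(M,R)$ and $M^{n\ast}$ denotes the $n$-fold iterated dual ($M^{0\ast}=M$). $\ell(-)$ is length, $\operatorname{type}(R)=\dim_k\operatorname{Hom}_R(k,R)$, and $\beta_0(M)=\dim_k(M\otimes_R k)$ is the minimal number of generators of $M$. *)

From HB Require Import structures.
From mathcomp Require Import all_boot all_order all_algebra.
From mathcomp Require Import boolp classical_sets.
Set Implicit Arguments. Unset Strict Implicit. Unset Printing Implicit Defensive.
Import GRing.Theory.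
Local Open Scope ring_scope.
Local Open Scope classical_set_scope.

Section Dual.
Variables (R : comUnitRingType) (M : lmodType R).

Record dualT := Dual {
  dfun :> M -> R ;
  dlin : forall (a : R) (u v : M), dfun (a *: u + v) = a * dfun u + dfun v }.

HB.instance Definition _ := gen_eqMixin dualT.
HB.instance Definition _ := gen_choiceMixin dualT.

Lemma dual_ext (f g : dualT) : (forall x, f x = g x) -> f = g.
Proof.
case: f g => f fl [g gl] /= fg; have efg : f = g by apply: funext.
by subst g; rewrite (Prop_irrelevance fl gl).
Qed.

Program Definition dzero : dualT := @Dual (fun _ => 0) _.
Next Obligation. by rewrite mulr0 addr0. Qed.
Program Definition dadd (f g : dualT) : dualT := @Dual (fun x => f x + g x) _.
Next Obligation. by rewrite !dlin mulrDr addrACA. Qed.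
Program Definition dopp (f : dualT) : dualT := @Dual (fun x => - f x) _.
Next Obligation. by rewrite dlin opprD mulrN. Qed.
Program Definition dscale (a : R) (f : dualT) : dualT := @Dual (fun x => a * f x) _.
Next Obligation. by rewrite dlin mulrDr mulrCA. Qed.

Lemma daddA : associative dadd.
Proof. by move=> f g h; apply: dual_ext => x /=; rewrite addrA. Qed.
Lemma daddC : commutative dadd.
Proof. by move=> f g; apply: dual_ext => x /=; rewrite addrC. Qed.
Lemma dadd0 : left_id dzero dadd.
Proof. by move=> f; apply: dual_ext => x /=; rewrite add0r. Qed.
Lemma daddN : left_inverse dzero dopp dadd.
Proof. by move=> f; apply: dual_ext => x /=; rewrite addNr. Qed.

HB.instance Definition _ := GRing.isZmodule.Build dualT daddA daddC dadd0 daddN.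

Lemma dscaleA a b (f : dualT) : dscale a (dscale b f) = dscale (a * b) f.
Proof. by apply: dual_ext => x /=; rewrite mulrA. Qed.
Lemma dscale1 : left_id 1 dscale.
Proof. by move=> f; apply: dual_ext => x /=; rewrite mul1r. Qed.
Lemma dscaleDr : right_distributive dscale +%R.
Proof. by move=> a f g; apply: dual_ext => x /=; rewrite mulrDr. Qed.
Lemma dscaleDl (f : dualT) : {morph dscale^~ f : a b / a + b}.
Proof. by move=> a b; apply: dual_ext => x /=; rewrite mulrDl. Qed.

HB.instance Definition _ :=
  GRing.Zmodule_isLmodule.Build R dualT dscaleA dscale1 dscaleDr dscaleDl.

End Dual.

Definition dual (R : comUnitRingType) (M : lmodType R) : lmodType R := dualT M.

Fixpoint ndual (R : comUnitRingType) (n : nat) (M : lmodType R) : lmodType R :=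
  match n with 0%N => M | n'.+1 => dual (ndual n' M) end.

Section Modules.
Variable R : comUnitRingType.

Definition submodule (M : lmodType R) (S : set M) : Prop :=
  S 0 /\ forall (a : R) (u v : M), S u -> S v -> S (a *: u + v).

Definition has_chain (M : lmodType R) (A : set M) (n : nat) : Prop :=
  exists c : nat -> set M,
    (forall i, (i <= n)%N -> submodule (c i) /\ c i `<=` A) /\
    (forall i, (i < n)%N -> c i `<` c i.+1).

Definition is_length (M : lmodType R) (A : set M) (l : nat) : Prop :=
  has_chain A l /\ forall n, has_chain A n -> (n <= l)%N.

(* length of (the submodule) A; junk value 0 if A has infinite length *)
Definition modlength (M : lmodType R) (A : set M) : nat :=
  xget 0%N [set l | is_length A l].

Definition length (M : lmodType R) : nat := modlength [set: M].

Definition generates (M : lmodType R) (n : nat) (v : 'I_n -> M) : Prop :=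
  forall x : M, exists r : 'I_n -> R, x = \sum_(i < n) r i *: v i.

Definition fin_gen (M : lmodType R) : Prop :=
  exists n (v : 'I_n -> M), generates v.

Definition beta0 (M : lmodType R) : nat :=
  xget 0%N [set n | (exists v : 'I_n -> M, generates v) /\
                    forall m, (exists w : 'I_m -> M, generates w) -> (n <= m)%N].

Definition free_sub (M : lmodType R) (N : set M) : Prop :=
  submodule N /\
  exists n (b : 'I_n -> M), (forall i, N (b i)) /\
    forall x, N x -> exists! r : 'I_n -> R, x = \sum_(i < n) r i *: b i.

Definition has_nonzero_free_summand (M : lmodType R) : Prop :=
  exists N P : set M,
    submodule N /\ submodule P /\
    (forall x, exists! yz : M * M, [/\ N yz.1, P yz.2 & x = yz.1 + yz.2]) /\
    N `&` P = [set 0] /\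
    free_sub N /\ N <> [set 0].

End Modules.

Section Rings.
Variable R : comUnitRingType.

Definition maxideal : set R := [set x | x \isn't a GRing.unit].

(* local: the non-units form an (the unique maximal) ideal *)
Definition local_ring : Prop :=
  forall x y : R, maxideal x -> maxideal y -> maxideal (x + y).

Definition noetherian_ring : Prop :=
  forall I : set R^o, submodule I ->
    exists n (v : 'I_n -> R),
      (forall i, I (v i)) /\
      forall x, I x -> exists r : 'I_n -> R, x = \sum_(i < n) r i * v i.

Definition maxideal_sq_zero : Prop :=
  forall x y : R, maxideal x -> maxideal y -> x * y = 0.

(* Hom_R(k, R), realised (universal property of k = R/m) as the
   R-linear maps R -> R vanishing on m *)
Definition hom_res_R : set (dual R^o) :=
  [set f | forall x : R, maxideal x -> f x = 0].

(* type(R) = dim_k Hom_R(k,R) = l_R(Hom_R(k,R)) (m kills Hom_R(k,R)) *)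
Definition ring_type : nat := modlength hom_res_R.

End Rings.

(* If [f x] is a unit for some functional [f] on [M], then [R x] is a free summand;
   so without free summands every functional lands in [m], hence kills [mM]
   (as [m^2 = 0]) and is a [k]-linear map [M/mM -> m]. With [u_1 .. u_b] minimal
   generators of [M] and [s_1 .. s_e] a [k]-basis of [m], the maps
   [x |-> coord_i(x) s_j] thus form a [k]-basis of [Hom(M, R)], of length [b e].
   [Hom(M, R)] is killed by [m], so when [m <> 0] its functionals again land in [m] and
   the computation iterates: [l(M^{n*}) = b e^n], while [type(R) = dim_k m = e].
   When [m = 0], [R] is a field and [M = 0]. *)
From Pilot Require Import Defs.
From HB Require Import structures.
From mathcomp Require Import all_boot all_order all_algebra.
From mathcomp Require Import all_classical all_reals all_analysis.
From mathcomp Require Import Rstruct Rstruct_topology.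
Set Implicit Arguments. Unset Strict Implicit. Unset Printing Implicit Defensive.
Import GRing.Theory Num.Theory.
Local Open Scope classical_set_scope.
Local Open Scope ring_scope.

Section ResidueBases.
Variable R : comUnitRingType.
Local Notation m := (@maxideal R).

Lemma maxideal0 : m 0. Proof. by rewrite /maxideal /= unitr0. Qed.
Lemma maxideal1 : ~ m 1. Proof. by rewrite /maxideal /= unitr1. Qed.
Lemma maxidealMl x y : m y -> m (x * y).
Proof. by rewrite /maxideal /= unitrM => /negbTE ->; rewrite andbF. Qed.
Lemma maxidealN x : m x -> m (- x).
Proof. by rewrite /maxideal /= unitrN. Qed.

Section SubmoduleTheory.
Variables (V : lmodType R) (A : set V).
Hypothesis subA : submodule A.

Lemma submodule0 : A 0. Proof. by case: subA. Qed.
Lemma submoduleD u v : A u -> A v -> A (u + v).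
Proof. by move=> Au Av; have := subA.2 1 u v Au Av; rewrite scale1r. Qed.
Lemma submoduleZ a u : A u -> A (a *: u).
Proof. by move=> Au; have := subA.2 a u 0 Au submodule0; rewrite addr0. Qed.
Lemma submoduleB u v : A u -> A v -> A (u - v).
Proof. by move=> Au Av; rewrite -scaleN1r; apply/submoduleD/submoduleZ. Qed.
Lemma submodule_sum (J : finType) (P : pred J) (F : J -> V) :
  (forall j, A (F j)) -> A (\sum_(j | P j) F j).
Proof.
by move=> AF; apply: (big_ind A) => //; [exact: submodule0 | exact: submoduleD].
Qed.

End SubmoduleTheory.

Lemma submoduleI (V : lmodType R) (A B : set V) :
  submodule A -> submodule B -> submodule (A `&` B).
Proof.
move=> subA subB; split.
  by split; [exact: (submodule0 subA) | exact: (submodule0 subB)].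
by move=> a u v [? ?] [? ?]; split; [apply: subA.2 | apply: subB.2].
Qed.

Section DualTheory.
Variables (V : lmodType R) (f : dual V).

Lemma dual0 : f 0 = 0.
Proof.
have := Defs.dlin f 1 0 0; rewrite scaler0 addr0 mul1r => f00.
by apply: (addrI (f 0)); rewrite addr0 -f00.
Qed.
Lemma dualD u v : f (u + v) = f u + f v.
Proof. by rewrite -{1}[u]scale1r Defs.dlin mul1r. Qed.
Lemma dualZ a u : f (a *: u) = a * f u.
Proof. by rewrite -[a *: u]addr0 Defs.dlin dual0 addr0. Qed.
Lemma dual_sum (J : finType) (F : J -> V) : f (\sum_j F j) = \sum_j f (F j).
Proof. exact: (big_morph f dualD dual0). Qed.

End DualTheory.

Lemma sum_dualE (V : lmodType R) (J : finType) (F : J -> dual V) x :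
  (\sum_j F j) x = \sum_j F j x.
Proof. exact: (big_morph (fun f : dual V => f x) (id1 := 0) (op1 := +%R)). Qed.

Definition spans (V : lmodType R) (A : set V) (I : finType) (w : I -> V) :=
  (forall i, A (w i)) /\ forall x, A x -> exists r : I -> R, x = \sum_i r i *: w i.

Definition indep_mod_max (V : lmodType R) (I : finType) (w : I -> V) :=
  forall r : I -> R, \sum_i r i *: w i = 0 -> forall i, m (r i).

Definition killed_by_max (V : lmodType R) (I : finType) (w : I -> V) :=
  forall i a, m a -> a *: w i = 0.

(* A basis of a vector space over [k = R/m]. *)
Definition residue_basis (V : lmodType R) (I : finType) (w : I -> V) :=
  [/\ spans [set: V] w, killed_by_max w & indep_mod_max w].

Section Length.
Variables (V : lmodType R) (I : finType) (w : I -> V).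

Definition span (S : {set I}) : set V :=
  [set x | exists r : I -> R, x = \sum_(i in S) r i *: w i].

Lemma span_submodule S : submodule (span S).
Proof.
split; first by exists (fun=> 0); rewrite big1 // => i _; rewrite scale0r.
move=> a u v [ru ->] [rv ->]; exists (fun i => a * ru i + rv i).
rewrite scaler_sumr -big_split; apply: eq_bigr => i _.
by rewrite scalerDl scalerA.
Qed.

Lemma span_subset (S1 S2 : {set I}) : S1 \subset S2 -> span S1 `<=` span S2.
Proof.
move=> sS12 x [r ->]; exists (fun i => if i \in S1 then r i else 0).
rewrite big_mkcond [RHS]big_mkcond; apply: eq_bigr => i _.
case: ifP => S1i; last by case: ifP => //; rewrite scale0r.
by rewrite (fintype.subsetP sS12 _ S1i).
Qed.

Lemma span_setD1 (S : {set I}) i0 x : i0 \in S -> span S x ->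
  exists r y, span (S :\ i0) y /\ x = y + r *: w i0.
Proof.
move=> Si0 [r ->]; exists (r i0), (\sum_(i in S :\ i0) r i *: w i).
split; first by exists r.
rewrite (bigD1 i0) //= addrC; congr (_ + _); apply: eq_bigl => i.
by rewrite in_setD1 andbC.
Qed.

Section Killed.
Hypothesis killed : killed_by_max w.

(* The coefficient of [w i0] in an element of [X] outside [span (S :\ i0)] is
   a unit, so [X] can be used to clear that coefficient from elements of [Y]. *)
Lemma properI_span_setD1 (S : {set I}) i0 (X Y : set V) : i0 \in S ->
  submodule X -> submodule Y -> Y `<=` span S ->
  X `<` Y -> ~ (X `<=` span (S :\ i0)) ->
  (X `&` span (S :\ i0)) `<` (Y `&` span (S :\ i0)).
Proof.
set W := span (S :\ i0) => Si0 subX subY YS [XY nYX] nXW.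
split; first by move=> z [? ?]; split => //; apply: XY.
move=> YWX; apply: nYX.
have [x [Xx nWx]] : exists x, X x /\ ~ W x.
  apply: contrapT => nex; apply: nXW => x Xx; apply: contrapT => nWx.
  by apply: nex; exists x.
have [r [wx [Wwx ex]]] := span_setD1 Si0 (YS _ (XY _ Xx)).
have ur : r \is a GRing.unit.
  by apply: contrapT => /negP nur; apply: nWx; rewrite ex killed // addr0.
move=> y Yy; have [r' [wy [Wwy ey]]] := span_setD1 Si0 (YS _ Yy).
set z := y - (r' / r) *: x.
have Yz : Y z by apply: submoduleB => //; apply: submoduleZ => //; apply: XY.
have Wz : W z.
  have -> : z = wy - (r' / r) *: wx.
    by rewrite /z ey ex scalerDr scalerA divrK // opprD addrACA subrr addr0.
  have subW : submodule W by exact: span_submodule.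
  by apply: submoduleB => //; apply: submoduleZ.
have [Xz _] := YWX z (conj Yz Wz).
by rewrite -(subrK ((r' / r) *: x) y); apply: submoduleD => //; apply: submoduleZ.
Qed.

Lemma has_chain_span_setD1 (S : {set I}) i0 n : i0 \in S ->
  has_chain (span S) n.+1 -> has_chain (span (S :\ i0)) n.
Proof.
set W := span (S :\ i0) => Si0 [c [subc ltc]].
pose d i := if pselect (c i.+1 `<=` W) is left _ then c i else c i.+1 `&` W.
exists d; split => [i ni|i ni]; rewrite /d.
  case: pselect => [cW|_].
    have [subci _] := subc i (leqW ni); split => // z.
    by move=> /(proj1 (ltc i ni)) /cW.
  have [subci _] := subc i.+1 ni; split; last by move=> z [].
  exact/submoduleI/span_submodule.
have [subc1 _] := subc i.+1 (ltnW ni); have [subc2 cS2] := subc i.+2 ni.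
have [c01 nc10] := ltc i (ltnW ni); have [c12 _] := ltc i.+1 ni.
case: pselect => c1W; case: pselect => c2W.
- exact: ltc (ltnW ni).
- have c1c2W : c i.+1 `<=` c i.+2 `&` W by move=> z c1z; split; [apply: c12 | apply: c1W].
  split; first by move=> z /c01 /c1c2W.
  by move=> c2Wc0; apply: nc10 => z /c1c2W /c2Wc0.
- by exfalso; apply: c1W => z /c12 /c2W.
- exact: properI_span_setD1 Si0 subc1 subc2 cS2 (ltc i.+1 ni) c1W.
Qed.

Lemma has_chain_span_le (S : {set I}) n : has_chain (span S) n -> (n <= #|S|)%N.
Proof.
elim: n S => // n IH S chS; have [S0|[i0 Si0]] := set_0Vmem S.
  have [c [subc ltc]] := chS; have [_ nc10] := ltc 0%N isT; exfalso.
  apply: nc10 => y c1y; have [_ c1S] := subc 1%N isT; have [subc0 _] := subc 0%N isT.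
  have [r ->] := c1S _ c1y; rewrite S0 big_set0; exact: submodule0.
by rewrite (cardsD1 i0 S) Si0 ltnS; apply/IH/has_chain_span_setD1.
Qed.

End Killed.

Section Independent.
Hypothesis indep : indep_mod_max w.

Lemma span_mem (S : {set I}) i : i \in S -> span S (w i).
Proof.
move=> Si; exists (fun j => (j == i)%:R).
rewrite (bigD1 i) //= eqxx scale1r big1 ?addr0 // => j /andP[_ /negbTE ->].
by rewrite scale0r.
Qed.

Lemma span_setD1_notin (S : {set I}) i : ~ span (S :\ i) (w i).
Proof.
move=> [r wi]; pose r' j := if j == i then -1 else if j \in S :\ i then r j else 0.
suff /indep/(_ i) : \sum_j r' j *: w j = 0.
  by rewrite /r' eqxx => /maxidealN; rewrite opprK; exact: maxideal1.
rewrite (bigD1 i) //= /r' eqxx scaleN1r wi addrC; apply/eqP; rewrite subr_eq0; apply/eqP.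
rewrite big_mkcond [RHS]big_mkcond; apply: eq_bigr => j _.
case: eqP => [->|_]; first by rewrite setD11.
by case: ifP => //; rewrite scale0r.
Qed.

Lemma has_chain_span (S : {set I}) : has_chain (span S) #|S|.
Proof.
have [k cardS] : exists k, #|S| = k by eexists.
rewrite cardS; elim: k S cardS => [|k IH] S cardS.
  by exists (fun=> span S); split => // i _; split => //; exact: span_submodule.
have [S0|[i0 Si0]] := set_0Vmem S; first by rewrite S0 cards0 in cardS.
have [c [subc ltc]] : has_chain (span (S :\ i0)) k.
  by apply: IH; move: cardS; rewrite (cardsD1 i0) Si0 add1n => -[].
have sub' : span (S :\ i0) `<=` span S by apply/span_subset/subsetDl.
exists (fun i => if i == k.+1 then span S else c i); split.
  move=> i; rewrite leq_eqVlt ltnS => /orP[/eqP ->|ik]; rewrite ?eqxx.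
    by split; first exact: span_submodule.
  by rewrite ltn_eqF //; have [subci ciS] := subc i ik; split => // z /ciS /sub'.
move=> i; rewrite ltnS leq_eqVlt => /orP[/eqP ->|ik].
  rewrite eqxx (ltn_eqF (ltnSn k)); have [_ ckS] := subc k (leqnn k).
  split; first by move=> z /ckS /sub'.
  by move=> Sck; apply: (@span_setD1_notin S i0); apply/ckS/Sck/span_mem.
by rewrite (ltn_eqF (leqW ik)) eqSS (ltn_eqF ik); exact: ltc.
Qed.

End Independent.

Lemma modlength_spans (A : set V) : killed_by_max w -> indep_mod_max w ->
  submodule A -> spans A w -> modlength A = #|I|.
Proof.
move=> killed indep subA [Aw spanA].
have spanTA : span [set: I] `<=` A.
  by move=> x [r ->]; apply: submodule_sum => // i; apply: submoduleZ.
have AspanT : A `<=` span [set: I].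
  by move=> x /spanA [r ->]; exists r; apply: eq_bigl => i; rewrite inE.
have chain_le n : has_chain A n -> (n <= #|I|)%N.
  move=> [c [subc ltc]]; rewrite -cardsT; apply: (has_chain_span_le killed).
  by exists c; split => // i ni; have [? cA] := subc i ni; split => // z /cA /AspanT.
have chainA : has_chain A #|I|.
  have [c [subc ltc]] := has_chain_span indep [set: I].
  rewrite cardsT in subc ltc; exists c; split => // i ni.
  by have [? cS] := subc i ni; split => // z /cS /spanTA.
apply: xget_unique => [|l [chl lel]]; first by split.
by apply/eqP; rewrite eqn_leq chain_le // lel.
Qed.

End Length.

Section MinimalGenerators.
Variables (V : lmodType R) (A : set V).

(* A relation with a unit coefficient expresses [v j] through the others. *)
Lemma spans_lift n (v : 'I_n.+1 -> V) (r : 'I_n.+1 -> R) j :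
  spans A v -> \sum_i r i *: v i = 0 -> r j \is a GRing.unit ->
  spans A (fun k : 'I_n => v (lift j k)).
Proof.
move=> [Av spanA] rel uj; split=> [k|x /spanA [c ->]]; first exact: Av.
move: rel; rewrite (bigD1_ord j) //=; set T := \sum_(k < n) _ => rel.
have vj : v j = - ((r j)^-1 *: T).
  rewrite -[v j]scale1r -(mulVr uj) -scalerA -scalerN; congr (_ *: _).
  by apply/eqP; rewrite -addr_eq0 rel.
exists (fun k => c (lift j k) - c j * (r j)^-1 * r (lift j k)).
rewrite (bigD1_ord j) //= vj [RHS](eq_bigr (fun k => c (lift j k) *: v (lift j k) -
   (c j * (r j)^-1) *: (r (lift j k) *: v (lift j k)))); last first.
  by move=> k _; rewrite scalerBl scalerA.
by rewrite sumrB -scaler_sumr addrC scalerN scalerA.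
Qed.

Lemma minimal_spans_indep n (v : 'I_n -> V) : spans A v ->
  (forall n' (v' : 'I_n' -> V), spans A v' -> (n <= n')%N) -> indep_mod_max v.
Proof.
case: n v => [|n] v spanv minv r rel j; first by case: j.
apply/negP => uj; have := minv _ _ (spans_lift spanv rel uj).
by rewrite ltnn.
Qed.

Lemma exists_minimal_spans : (exists n (v : 'I_n -> V), spans A v) ->
  exists n (v : 'I_n -> V),
    spans A v /\ forall n' (v' : 'I_n' -> V), spans A v' -> (n <= n')%N.
Proof.
move=> exv; have exn : exists n, `[< exists v : 'I_n -> V, spans A v >].
  by case: exv => n [v spanv]; exists n; apply/asboolP; exists v.
case: (ex_minnP exn) => n /asboolP [v spanv] minn; exists n, v; split => //.
by move=> n' v' spanv'; apply: minn; apply/asboolP; exists v'.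
Qed.

End MinimalGenerators.

Section DualBasis.
Variables (V : lmodType R) (I : finType) (u : I -> V).
Hypotheses (u_spans : spans [set: V] u) (u_indep : indep_mod_max u).

(* Coefficients with respect to [u] are only determined modulo [m]. *)
Definition coord (x : V) : I -> R := projT1 (cid (u_spans.2 x Logic.I)).

Lemma coordE x : x = \sum_i coord x i *: u i.
Proof. exact: (projT2 (cid (u_spans.2 x Logic.I))). Qed.

Lemma coord_linear_mod a x y i :
  m (coord (a *: x + y) i - (a * coord x i + coord y i)).
Proof.
apply: (u_indep (r := fun i => coord (a *: x + y) i - (a * coord x i + coord y i))).
rewrite (eq_bigr (fun i => coord (a *: x + y) i *: u i -
   (a *: (coord x i *: u i) + coord y i *: u i))); last first.
  by move=> k _; rewrite scalerBl scalerDl scalerA.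
by rewrite sumrB big_split /= -scaler_sumr -!coordE subrr.
Qed.

Lemma coord_basis_mod l i : m (coord (u l) i - (i == l)%:R).
Proof.
apply: (u_indep (r := fun i => coord (u l) i - (i == l)%:R)).
rewrite (eq_bigr (fun i => coord (u l) i *: u i - (i == l)%:R *: u i)); last first.
  by move=> k _; rewrite scalerBl.
rewrite sumrB -coordE (bigD1 l) //= eqxx scale1r big1 ?addr0 ?subrr //.
by move=> k /negbTE ->; rewrite scale0r.
Qed.

Section CoordDual.
Variables (i : I) (t : R).
Hypothesis killed_t : forall a, m a -> a * t = 0.

Lemma coord_dual_linear a x y :
  coord (a *: x + y) i * t = a * (coord x i * t) + coord y i * t.
Proof.
have /eqP := killed_t (coord_linear_mod a x y i).
by rewrite mulrBl subr_eq0 => /eqP ->; rewrite mulrDl mulrA.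
Qed.

Definition coord_dual : dual V := Dual coord_dual_linear.

Lemma coord_dual_basis l : coord_dual (u l) = (i == l)%:R * t.
Proof.
have /eqP := killed_t (coord_basis_mod l i).
by rewrite mulrBl subr_eq0 => /eqP.
Qed.

End CoordDual.

Lemma card0_of_field_dual_max : (forall a, m a -> a = 0) ->
  (forall (f : dual V) x, m (f x)) -> #|I| = 0%N.
Proof.
move=> m0 dual_max; apply: eq_card0 => i; exfalso.
have killed1 a : m a -> a * 1 = 0 by move=> /m0 ->; rewrite mul0r.
have := dual_max (coord_dual i killed1) (u i).
by rewrite coord_dual_basis eqxx mul1r; exact: maxideal1.
Qed.

Hypothesis mq : maxideal_sq_zero R.
Variables (J : finType) (s : J -> R^o).
Hypotheses (s_spans : spans (m : set R^o) s) (s_indep : indep_mod_max s).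

(* Multiplying by [s j] in [m] removes the ambiguity of [coord] since [m^2 = 0]. *)
Definition dual_family (p : I * J) : dual V :=
  coord_dual p.1 (fun a ma => mq ma (s_spans.1 p.2)).

Lemma dual_family_basis p l : dual_family p (u l) = (p.1 == l)%:R * s p.2.
Proof. exact: coord_dual_basis. Qed.

Lemma dual_family_spans : (forall (f : dual V) x, m (f x)) ->
  spans [set: dual V] dual_family.
Proof.
move=> dual_max; split => // f _.
have [a fu] : exists a : I -> J -> R, forall i, f (u i) = \sum_j a i j * s j.
  exists (fun i => projT1 (cid (s_spans.2 _ (dual_max f (u i))))) => i.
  exact: (projT2 (cid (s_spans.2 _ (dual_max f (u i))))).
exists (fun p => a p.1 p.2); apply: dual_ext => x.
rewrite sum_dualE {1}(coordE x) dual_sum.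
rewrite -(pair_bigA _ (fun i j => a i j * (coord x i * s j))).
apply: eq_bigr => i _; rewrite dualZ fu mulr_sumr; apply: eq_bigr => j _.
by rewrite mulrCA.
Qed.

Lemma dual_family_killed : killed_by_max dual_family.
Proof.
move=> p a ma; apply: dual_ext => x /=.
by rewrite mulrCA (mq ma (s_spans.1 p.2)) mulr0.
Qed.

Lemma dual_family_indep : indep_mod_max dual_family.
Proof.
move=> r rel [l j]; have := congr1 (fun f : dual V => f (u l)) rel.
rewrite /= sum_dualE (eq_bigr (fun p => r (p.1, p.2) * ((p.1 == l)%:R * s p.2)));
  last first.
  by case=> i k _; rewrite -dual_family_basis.
rewrite -(pair_bigA _ (fun i j => r (i, j) * ((i == l)%:R * s j))) /= (bigD1 l) //=.
rewrite [X in _ + X]big1 ?addr0 => [|i /negbTE il]; last first.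
  by apply: big1 => k _; rewrite il mul0r mulr0.
under eq_bigr do rewrite eqxx mul1r.
by move/(s_indep (r := fun k => r (l, k))).
Qed.

Lemma dual_residue_basis : (forall (f : dual V) x, m (f x)) ->
  residue_basis dual_family.
Proof.
move=> dual_max; split; first exact: dual_family_spans.
  exact: dual_family_killed.
exact: dual_family_indep.
Qed.

End DualBasis.

Lemma maxideal_submodule : local_ring R -> submodule (m : set R^o).
Proof.
move=> loc; split=> [|a u v mu mv]; first exact: maxideal0.
by apply: loc => //; apply: maxidealMl.
Qed.

Lemma maxideal_spans : local_ring R -> noetherian_ring R ->
  exists n (v : 'I_n -> R^o), spans (m : set R^o) v.
Proof. by move=> loc /(_ _ (maxideal_submodule loc)). Qed.

Lemma fin_gen_spans (V : lmodType R) : fin_gen V ->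
  exists n (v : 'I_n -> V), spans [set: V] v.
Proof. by case=> n [v genv]; exists n, v; split=> // x _; exact: genv. Qed.

Lemma beta0_minimal (V : lmodType R) n (v : 'I_n -> V) : spans [set: V] v ->
  (forall n' (v' : 'I_n' -> V), spans [set: V] v' -> (n <= n')%N) -> beta0 V = n.
Proof.
have spansT n' (v' : 'I_n' -> V) : generates v' -> spans [set: V] v'.
  by move=> genv'; split=> // x _; exact: genv'.
move=> [_ spanv] minv; apply: xget_unique => [|n' [[v' genv'] minn']].
  by split=> [|n' [v' /spansT /minv //]]; exists v => x; exact: spanv.
apply/eqP; rewrite eqn_leq minn' ?(minv _ _ (spansT _ _ genv')) //.
by exists v => x; exact: spanv.
Qed.

Section FreeSummand.
Variables (V : lmodType R) (f : dual V) (x : V).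
Hypothesis fx1 : f x = 1.

Let line : set V := [set y | exists a, y = a *: x].

Lemma line_submodule : submodule line.
Proof.
split; first by exists 0; rewrite scale0r.
by move=> a _ _ [b ->] [c ->]; exists (a * b + c); rewrite scalerDl scalerA.
Qed.

Lemma line_free : free_sub line.
Proof.
split; first exact: line_submodule.
exists 1%N, (fun=> x); split=> [_|_ [a ->]]; first by exists 1; rewrite scale1r.
exists (fun=> a); split=> [|r ar]; first by rewrite big_ord1.
apply: funext => i; rewrite (ord1 i).
by have := congr1 f ar; rewrite big_ord1 !dualZ fx1 !mulr1.
Qed.

Lemma kernel_submodule : submodule [set y | f y = 0].
Proof.
split=> [|a u v /= fu fv]; first exact: dual0.
by rewrite Defs.dlin fu fv mulr0 addr0.
Qed.

Lemma has_nonzero_free_summand_dual : has_nonzero_free_summand V.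
Proof.
exists line, [set y | f y = 0]; split; first exact: line_submodule.
split; first exact: kernel_submodule.
split=> [y|].
  exists (f y *: x, y - f y *: x); split=> [|[_ z] [/= [a ->] fz ->]].
    split=> /=; [by exists (f y) | | by rewrite addrC subrK].
    by rewrite dualD -scaleNr dualZ fx1 mulr1 subrr.
  by rewrite dualD dualZ fx1 fz mulr1 addr0 [a *: x + z]addrC addrK.
split.
  apply/seteqP; split=> y /=; last first.
    by move=> ->; split; [exists 0; rewrite scale0r | exact: dual0].
  by move=> [[a ->]]; rewrite dualZ fx1 mulr1 => ->; rewrite scale0r.
split; first exact: line_free.
move=> line0; have : line x by exists 1; rewrite scale1r.
by rewrite line0 /= => x0; move: fx1; rewrite x0 dual0 => /eqP; rewrite eq_sym oner_eq0.
Qed.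

End FreeSummand.

Lemma no_free_summand_dual_max (V : lmodType R) :
  ~ has_nonzero_free_summand V -> forall (f : dual V) x, m (f x).
Proof.
move=> nofree f x; apply/negP => ufx; apply: nofree.
by apply: (@has_nonzero_free_summand_dual _ f ((f x)^-1 *: x)); rewrite dualZ mulVr.
Qed.

Lemma killed_dual_max (V : lmodType R) (I : finType) (w : I -> V) a0 :
  spans [set: V] w -> killed_by_max w -> m a0 -> a0 != 0 ->
  forall (f : dual V) x, m (f x).
Proof.
move=> [_ spanw] killed ma0 a0n0 f x; apply/negP => ufx; move/negP: a0n0; apply.
have [r xr] := spanw x Logic.I; apply/eqP/(mulIr ufx).
rewrite mul0r -dualZ xr scaler_sumr big1 ?dual0 // => i _.
by rewrite scalerA mulrC -scalerA killed // scaler0.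
Qed.

Lemma dual_trivial (V : lmodType R) : (forall x : V, x = 0) -> forall f : dual V, f = 0.
Proof. by move=> V0 f; apply: dual_ext => x; rewrite (V0 x) dual0. Qed.

Lemma length_trivial (V : lmodType R) : (forall x : V, x = 0) -> length V = 0%N.
Proof.
move=> V0; rewrite /length (modlength_spans (w := fun i : 'I_0 => 0)) ?card_ord //.
- by move=> r _ [].
- by split=> // x _; exists (fun=> 0); rewrite big_ord0.
Qed.

Lemma length_ndual_trivial (V : lmodType R) n :
  (forall x : V, x = 0) -> length (ndual n V) = 0%N.
Proof.
move=> V0; apply: length_trivial; elim: n => //= n IH.
exact: dual_trivial.
Qed.

Lemma spans_card0 (V : lmodType R) (I : finType) (u : I -> V) :
  spans [set: V] u -> #|I| = 0%N -> forall x : V, x = 0.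
Proof.
move=> [_ spanu] I0 x; have [r ->] := spanu x Logic.I.
by apply: big_pred0 => i; have := card0_eq I0 i; rewrite !inE.
Qed.

Lemma mulr_dual_linear t a (x y : R^o) : (a *: x + y) * t = a * (x * t) + y * t.
Proof. by rewrite mulrDl mulrA. Qed.

Definition mulr_dual t : dual R^o := Dual (mulr_dual_linear t).

Lemma hom_res_R_submodule : submodule (@hom_res_R R).
Proof. by split=> // a f g mf mg x mx; rewrite /= mf // mg // mulr0 addr0. Qed.

(* [Hom(k, R)] is the annihilator of [m], which is [m] as [m^2 = 0] and [m <> 0]. *)
Lemma ring_type_card (J : finType) (s : J -> R^o) a0 : maxideal_sq_zero R ->
  spans (m : set R^o) s -> indep_mod_max s -> m a0 -> a0 != 0 ->
  ring_type R = #|J|.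
Proof.
move=> mq [ms spanm] s_indep ma0 a0n0.
have mul1 (x : R) : x *: (1 : R^o) = x by exact: mulr1.
apply: (modlength_spans (w := fun j => mulr_dual (s j))).
- move=> j a ma; apply: dual_ext => x /=.
  by rewrite mulrCA (mq _ _ ma (ms j)) mulr0.
- move=> r /(congr1 (fun f : dual R^o => f 1)); rewrite /= sum_dualE.
  under eq_bigr do rewrite /= mul1r.
  exact: s_indep.
- exact: hom_res_R_submodule.
split=> [j x mx|f hf]; first by rewrite /= (mq _ _ mx (ms j)).
have mf1 : m (f 1).
  apply/negP => uf1; move/negP: a0n0; apply; apply/eqP/(mulIr uf1).
  by rewrite -dualZ mul1 hf // mul0r.
have [c f1] := spanm _ mf1; exists c; apply: dual_ext => x.
rewrite sum_dualE -[in LHS](mul1 x) dualZ f1 mulr_sumr.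
by apply: eq_bigr => j _; rewrite /= mulrCA.
Qed.

Section IteratedDual.
Hypothesis mq : maxideal_sq_zero R.
Variables (J : finType) (s : J -> R^o) (a0 : R).
Hypotheses (s_spans : spans (m : set R^o) s) (s_indep : indep_mod_max s).
Hypotheses (ma0 : m a0) (a0n0 : a0 != 0).

Lemma ndual_residue_basis (V : lmodType R) (I : finType) (u : I -> V) :
  spans [set: V] u -> indep_mod_max u -> (forall (f : dual V) x, m (f x)) ->
  forall n, exists (K : finType) (w : K -> ndual n.+1 V),
    residue_basis w /\ #|K| = (#|I| * #|J| ^ n.+1)%N.
Proof.
move=> u_spans u_indep dual_max; elim=> [|n [K [w [[w_spans w_killed w_indep] cardK]]]].
  exists (I * J)%type, (dual_family u_spans u_indep mq s_spans).
  by rewrite card_prod expn1; split=> //; exact: dual_residue_basis.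
exists (K * J)%type, (dual_family w_spans w_indep mq s_spans).
have w_max := killed_dual_max w_spans w_killed ma0 a0n0.
rewrite card_prod cardK [(_ ^ n.+2)%N]expnSr mulnA; split=> //.
exact (dual_residue_basis w_spans w_indep mq s_spans s_indep w_max).
Qed.

Lemma length_ndual (V : lmodType R) (I : finType) (u : I -> V) n :
  spans [set: V] u -> indep_mod_max u -> (forall (f : dual V) x, m (f x)) ->
  length (ndual n.+1 V) = (#|I| * #|J| ^ n.+1)%N.
Proof.
move=> u_spans u_indep dual_max.
have [K [w [[w_spans w_killed w_indep] <-]]] :=
  ndual_residue_basis u_spans u_indep dual_max n.
exact: modlength_spans w_killed w_indep _ w_spans.
Qed.

End IteratedDual.

End ResidueBases.

Theorem proposition5p9 (R : comUnitRingType) (M : lmodType R) :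
  local_ring R -> noetherian_ring R -> maxideal_sq_zero R ->
  fin_gen M -> ~ has_nonzero_free_summand M ->
  (fun n : nat => ((length (ndual n M))%:R / (ring_type R)%:R ^+ n
                    : Rdefinitions.R))
    @ \oo --> ((beta0 M)%:R : Rdefinitions.R).
Proof.
move=> loc noeth mq /fin_gen_spans fg nofree.
have [e [s [s_spans s_min]]] := exists_minimal_spans (maxideal_spans loc noeth).
have [b [u [u_spans u_min]]] := exists_minimal_spans fg.
have s_indep := minimal_spans_indep s_spans s_min.
have u_indep := minimal_spans_indep u_spans u_min.
have dual_max := no_free_summand_dual_max nofree.
rewrite (beta0_minimal u_spans u_min); apply: cvg_near_cst.
exists 1%N => // -[//|n] _.
have [[a0 [ma0 a0n0]]|field] := pselect (exists a0 : R, maxideal a0 /\ a0 != 0).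
  have e_gt0 : (0 < e)%N.
    case: e s s_spans {s_min s_indep} => // s [_ /(_ _ ma0) [c a0c]].
    by move: a0n0; rewrite a0c big_ord0 eqxx.
  rewrite (length_ndual mq s_spans s_indep ma0 a0n0 _ u_spans u_indep dual_max).
  rewrite (ring_type_card mq s_spans s_indep ma0 a0n0) !card_ord natrM natrX mulfK //.
  by rewrite expf_neq0 // pnatr_eq0 -lt0n.
have m0 (a : R) : maxideal a -> a = 0.
  by move=> ma; apply/eqP/negPn/negP => an0; apply: field; exists a.
have b0 : b = 0%N.
  by rewrite -(card_ord b); exact: card0_of_field_dual_max u_spans u_indep m0 dual_max.
rewrite b0 length_ndual_trivial ?mul0r //.
by apply: spans_card0 u_spans _; rewrite card_ord.
Qed.
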